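(* Let $\Sigma$ be a finite alphabet with $N=|\Sigma|\ge2$, let $\delta$ be a Hamming compatible metric on $\Sigma^*$, and let $u\in\Sigma_n$, $w\in\Sigma_m$ with $n\ge m$ and $\delta(u,w)<d_2(u,w)$. Let $h=H(\underline{u},\underline{w})$. Then exactly $(N-1)^{n-h}$ Hamming opposites $v$ of $u$ satisfy $H(\underline{u},\underline{w})+H(\underline{v},\underline{w})=m$, and every such $v$ satisfies $\delta(v,w)\ge d_2(v,w)$. In particular, when $N=2$, the unique Hamming opposite $v$ of $u$ satisfies $\delta(v,w)\ge d_2(v,w)$.
   Context: $\Sigma_n$ is the set of words of length $n$ over $\Sigma$, $\Sigma^*$ the set of all finite words, $l(u)$ the length of $u$, $H$ the Hamming distance between equal-length words. For arbitrary $x,y$, if $l(x)\ge l(y)$, $\underline{x}$ is the prefix of $x$ of length $l(y)$ and $\underline{y}=y$ (symmetrically otherwise). Metrics are integer-valued; a metric $\delta$ on $\Sigma^*$ is Hamming compatible if $\delta(x,y)=H(x,y)$ whenever $l(x)=l(y)$. $d_2(x,y)=H(\underline{x},\underline{y})+\lceil |l(x)-l(y)|/2\rceil$. Two words of the same length $n$ are Hamming opposites if their Hamming distance is $n$. *)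

From mathcomp Require Import all_boot.
Set Implicit Arguments. Unset Strict Implicit. Unset Printing Implicit Defensive.

Section Words.
Variable Sigma : finType.

(* Hamming distance; only used on words of equal length. *)
Definition hamming (x y : seq Sigma) : nat :=
  count (fun p : Sigma * Sigma => p.1 != p.2) (zip x y).

(* [under x y] is the underlined x relative to y: the prefix of x of length
   l(y) if l(x) >= l(y), and x itself otherwise (take does both). *)
Definition under (x y : seq Sigma) : seq Sigma := take (size y) x.

(* d_2(x,y) = H(x_, y_) + ceil(|l(x)-l(y)|/2) ; ceil(k/2) = uphalf k *)
Definition d2 (x y : seq Sigma) : nat :=
  hamming (under x y) (under y x)
  + uphalf ((size x - size y) + (size y - size x)).

(* integer-valued (hence nat-valued, metrics being nonnegative) metric *)
Definition is_metric (delta : seq Sigma -> seq Sigma -> nat) : Prop :=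
  (forall x y, delta x y = 0 <-> x = y) /\
  (forall x y, delta x y = delta y x) /\
  (forall x y z, delta x z <= delta x y + delta y z).

Definition hamming_compatible (delta : seq Sigma -> seq Sigma -> nat) : Prop :=
  forall x y, size x = size y -> delta x y = hamming x y.

End Words.

From mathcomp Require Import all_boot.
From mathcomp Require Import zify.
Set Implicit Arguments. Unset Strict Implicit. Unset Printing Implicit Defensive.

(* Write u_, w_ for the prefixes of length m = l(w) <= n = l(u).
   Everything is decided position by position.  If v is a Hamming opposite of
   u, then at each position i < m at most one of u_i, v_i equals w_i, so
   H(u_,w) + H(v_,w) >= m, with equality iff every position i < m has
   u_i = w_i or v_i = w_i.  Hence the opposites v realising equality are
   exactly the words with v_i <> u_i everywhere and v_i = w_i at the h
   positions where u_i <> w_i: one choice at those positions and N - 1 at the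
   others, which gives (N-1)^(n-h).  The lower bound delta(v,w) >= d2(v,w) is
   the triangle inequality n = delta(u,v) <= delta(u,w) + delta(w,v) combined
   with delta(u,w) < d2(u,w) and 2 ceil(k/2) <= k + 1.  Over a binary
   alphabet the equality condition is automatic, since v_i is forced to be
   the unique letter different from u_i. *)

Lemma card_tuple_family (T : finType) (n : nat) (A : 'I_n -> pred T) :
  #|[set t : n.-tuple T | [forall i, tnth t i \in A i]]| = \prod_(i < n) #|A i|.
Proof.
pose g (t : n.-tuple T) : {ffun 'I_n -> T} := [ffun i => tnth t i].
have g_bij : bijective g.
  exists (fun f : {ffun 'I_n -> T} => [tuple f i | i < n]) => [t|f].
    by apply: eq_from_tnth => i; rewrite tnth_mktuple ffunE.
  by apply/ffunP => i; rewrite ffunE tnth_mktuple.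
have -> : [set t : n.-tuple T | [forall i, tnth t i \in A i]] = g @^-1: family A.
  by apply/setP => t; rewrite !inE; apply/forallP/familyP => H i;
     have := H i; rewrite ?ffunE.
rewrite on_card_preimset; last exact: onW_bij.
by rewrite card_family foldrE big_map big_enum.
Qed.

Lemma prod_one_or_const (k K : nat) (P : pred 'I_k) :
  \prod_(i < k) (if P i then 1 else K) = K ^ (k - \sum_(i < k) P i).
Proof.
have split_k : \sum_(i < k) P i + \sum_(i < k) ~~ P i = k.
  rewrite -big_split /= -[RHS]card_ord -sum1_card.
  by apply: eq_bigr => i _; case: (P i).
rewrite -[X in X - _]split_k addKn expn_sum.
by apply: eq_bigr => i _; case: (P i).
Qed.

Lemma uphalf_double_le (k : nat) : (uphalf k).*2 <= k.+1.
Proof.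
rewrite uphalf_half doubleD -[in X in _ <= X](odd_double_half k) -addSn.
by rewrite leq_add2r; case: (odd k).
Qed.

Section Hamming.
Variables (Sigma : finType) (x0 : Sigma).

Lemma hamming_sum (x y : seq Sigma) : size x = size y ->
  hamming x y = \sum_(i < size x) (nth x0 x i != nth x0 y i).
Proof.
elim: x y => [|a x IH] [|b y] //= Hs; first by rewrite big_ord0.
by case: Hs => Hs; rewrite /hamming /= -/(hamming x y) big_ord_recl /= IH.
Qed.

Lemma hamming_oppositeE (k : nat) (x y : seq Sigma) :
  size x = k -> size y = k ->
  (hamming x y == k) = [forall i : 'I_k, nth x0 x i != nth x0 y i].
Proof.
move=> Hx Hy; rewrite hamming_sum Hx ?Hy //.
have /leqif_sum le_sum1 : forall i : 'I_k, true ->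
    (nth x0 x i != nth x0 y i : nat) <= 1 ?= iff (nth x0 x i != nth x0 y i).
  by move=> i _; case: (_ != _).
by rewrite -[X in _ == X]card_ord -sum1_card le_sum1.2.
Qed.

Lemma mismatch_leqif (a b c : Sigma) : a != c ->
  1 <= (a != b) + (c != b) ?= iff (a == b) || (c == b).
Proof.
move=> Hac; case: (eqVneq a b) => [Eab|Nab]; case: (eqVneq c b) => [Ecb|Ncb] //.
by rewrite Eab Ecb eqxx in Hac.
Qed.

Lemma opposites_hamming_leqif (k : nat) (x y z : seq Sigma) :
  size x = k -> size y = k -> size z = k ->
  [forall i : 'I_k, nth x0 x i != nth x0 z i] ->
  k <= hamming x y + hamming z y
    ?= iff [forall i : 'I_k, (nth x0 x i == nth x0 y i) || (nth x0 z i == nth x0 y i)].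
Proof.
move=> Hx Hy Hz /forallP Hxz.
rewrite !hamming_sum ?Hx ?Hz // -big_split /= -[X in X <= _ ?= iff _]card_ord -sum1_card.
by apply: leqif_sum => i _; apply: mismatch_leqif.
Qed.

Lemma binary_other_letter (a b c : Sigma) : #|Sigma| = 2 ->
  a != b -> a != c -> b = c.
Proof.
move=> N2 Hab Hac; have : #|predC1 a| <= 1 by rewrite cardC1 N2.
by move/card_le1_eqP; apply; rewrite !inE eq_sym.
Qed.

End Hamming.

Lemma d2_shorter (Sigma : finType) (x y : seq Sigma) : size y <= size x ->
  d2 x y = hamming (take (size y) x) y + uphalf (size x - size y).
Proof.
move=> Hyx; rewrite /d2 /under (take_oversize Hyx).
by move: Hyx; rewrite -subn_eq0 => /eqP->; rewrite addn0.
Qed.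

Lemma opposite_d2_lower_bound (Sigma : finType) (delta : seq Sigma -> seq Sigma -> nat)
    (u v w : seq Sigma) :
  is_metric delta -> hamming_compatible delta ->
  size v = size u -> size w <= size u -> hamming u v = size u ->
  hamming (take (size w) u) w + hamming (take (size w) v) w = size w ->
  delta u w < d2 u w -> d2 v w <= delta v w.
Proof.
move=> [_ [delta_sym delta_tri]] compat Hvu Hwu Huv Hsum Hlt.
have Hn : size u <= delta u w + delta v w.
  by rewrite -{1}Huv -compat // (delta_sym v); apply: delta_tri.
move: Hlt; rewrite !d2_shorter ?Hvu //.
have := uphalf_double_le (size u - size w); lia.
Qed.

Section Opposites.
Variables (Sigma : finType) (x0 : Sigma) (n m : nat) (u w : seq Sigma).
Hypotheses (Hu : size u = n) (Hw : size w = m) (Hmn : m <= n).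

(* Positions where an equality-realising opposite v must copy w. *)
Definition forced (i : nat) : bool := (i < m) && (nth x0 u i != nth x0 w i).

Definition admissible (i : nat) : pred Sigma :=
  [pred x | (x != nth x0 u i) && (forced i ==> (x == nth x0 w i))].

Lemma opposite_conditionE (v : seq Sigma) : size v = n ->
  (hamming u v == n) && (hamming (take m u) w + hamming (take m v) w == m)
  = [forall i : 'I_n, nth x0 v i \in admissible i].
Proof.
move=> Hv; rewrite (hamming_oppositeE x0 Hu Hv).
have [Hopp|] := boolP [forall i : 'I_n, nth x0 u i != nth x0 v i]; last first.
  move=> /forallPn [i]; rewrite negbK => /eqP Eui; apply/esym/forallP => /(_ i).
  by rewrite inE Eui eqxx.
have Hopp_m : [forall i : 'I_m, nth x0 (take m u) i != nth x0 (take m v) i].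
  by apply/forallP => i; rewrite !nth_take //; apply: (forallP Hopp (widen_ord Hmn i)).
have take_m (s : seq Sigma) : size s = n -> size (take m s) = m.
  by move=> Hs; rewrite size_takel ?Hs.
rewrite /= eq_sym (opposites_hamming_leqif (take_m u Hu) Hw (take_m v Hv) Hopp_m).2.
apply/forallP/forallP => H i.
  rewrite inE eq_sym (forallP Hopp i) /forced /=.
  case: ltnP => //= Him; have := H (Ordinal Him); rewrite /= !nth_take //.
  by case: eqP.
have := H (widen_ord Hmn i); rewrite inE /forced /= ltn_ord !nth_take //.
by case: (nth x0 u i =P nth x0 w i) => //= _ /andP [_ ->].
Qed.

Lemma card_admissible (i : nat) :
  #|admissible i| = if forced i then 1 else #|Sigma|.-1.
Proof.
rewrite /admissible; case: ifP => Fi /=.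
  rewrite -(card1 (nth x0 w i)); apply: eq_card => x; rewrite !inE.
  case: (eqVneq x (nth x0 w i)) => [->|_]; rewrite ?andbF // andbT.
  by case/andP: Fi; rewrite eq_sym.
by rewrite -(cardC1 (nth x0 u i)); apply: eq_card => x; rewrite !inE andbT.
Qed.

Lemma sum_forced : \sum_(i < n) forced i = hamming (take m u) w.
Proof.
have size_um : size (take m u) = m by rewrite size_takel ?Hu.
rewrite (hamming_sum x0) size_um ?Hw //.
rewrite (big_ord_widen n (fun i => (nth x0 (take m u) i != nth x0 w i) : nat) Hmn).
rewrite [RHS]big_mkcond.
by apply: eq_bigr => i _; rewrite /forced; case: ltnP => // Him; rewrite nth_take.
Qed.

Lemma card_opposites :
  #|[set v : n.-tuple Sigma | (hamming u v == n)
      && (hamming (take m u) w + hamming (take m v) w == m)]|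
  = (#|Sigma| - 1) ^ (n - hamming (take m u) w).
Proof.
have -> : [set v : n.-tuple Sigma | (hamming u v == n)
      && (hamming (take m u) w + hamming (take m v) w == m)]
    = [set v : n.-tuple Sigma | [forall i, tnth v i \in admissible i]].
  apply/setP => v; rewrite !inE opposite_conditionE ?size_tuple //.
  by apply: eq_forallb => i; rewrite (tnth_nth x0).
rewrite card_tuple_family; under eq_bigr do rewrite card_admissible.
by rewrite prod_one_or_const sum_forced subn1.
Qed.

Lemma binary_opposite_equality (v : seq Sigma) : #|Sigma| = 2 ->
  size v = n -> hamming u v = n ->
  hamming (take m u) w + hamming (take m v) w = m.
Proof.
move=> N2 Hv Huv; apply/eqP; have := opposite_conditionE Hv.
rewrite Huv eqxx /= => ->; apply/forallP => i; rewrite inE.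
have /forallP/(_ i) Hi : [forall i : 'I_n, nth x0 u i != nth x0 v i].
  by rewrite -(hamming_oppositeE x0 Hu Hv) Huv.
rewrite eq_sym Hi /=; apply/implyP => /andP [_ Huw].
by rewrite (binary_other_letter N2 Huw Hi).
Qed.

End Opposites.

Theorem mainTheorem10 (Sigma : finType) (delta : seq Sigma -> seq Sigma -> nat)
  (n m : nat) (u w : seq Sigma) :
  2 <= #|Sigma| ->
  is_metric delta -> hamming_compatible delta ->
  size u = n -> size w = m -> m <= n ->
  delta u w < d2 u w ->
  let h := hamming (under u w) (under w u) in
  #|[set v : n.-tuple Sigma | (hamming u v == n)
       && (hamming (under u w) (under w u) + hamming (under v w) (under w v) == m)]|
    = (#|Sigma| - 1) ^ (n - h)
  /\ (forall v : seq Sigma, size v = n -> hamming u v = n ->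
        hamming (under u w) (under w u) + hamming (under v w) (under w v) = m ->
        d2 v w <= delta v w)
  /\ (#|Sigma| = 2 -> forall v : seq Sigma, size v = n -> hamming u v = n ->
        d2 v w <= delta v w).
Proof.
move=> N2 Hmetric Hcompat Hu Hw Hmn Hlt h.
case/card_gt0P: (ltnW N2) => x0 _.
have under_by_w (v : seq Sigma) : under v w = take m v by rewrite /under Hw.
have under_w_left (v : seq Sigma) : size v = n -> under w v = w.
  by move=> Hv; rewrite /under take_oversize // Hw Hv.
have lower_bound (v : seq Sigma) : size v = n -> hamming u v = n ->
    hamming (take m u) w + hamming (take m v) w = m -> d2 v w <= delta v w.
  move=> Hv Huv Hsum; apply: (opposite_d2_lower_bound Hmetric Hcompat) Hlt;
  by rewrite ?Hu ?Hv ?Hw.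
rewrite /h (under_by_w u) (under_w_left u Hu); split; [|split].
- rewrite -(card_opposites x0 Hu Hw Hmn); apply: eq_card => v.
  by rewrite !inE under_by_w under_w_left ?size_tuple.
- by move=> v Hv; rewrite under_by_w under_w_left //; apply: lower_bound.
- move=> N_2 v Hv Huv; apply: lower_bound => //.
  exact: (binary_opposite_equality x0 Hu Hw Hmn N_2).
Qed.
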